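(* Let $K$ be a finite connected two-dimensional CW complex whose fundamental group $\Pi$ has a presentation $\langle x_1,\ldots,x_n\mid r_1,\ldots,r_m\rangle$ such that $K$ is homotopy equivalent to the model two-complex of this presentation. Suppose $H^2(K;\mathbb{Z})$ is finite of odd order. Then $m\leq n$, $\hom(\Pi;\mathbb{Z}_2)\cong\mathbb{Z}_2^{\,n-m}$, and every $\alpha\in\hom(\Pi;\mathbb{Z}_2)$ lifts through the natural epimorphism $\mathfrak{q}:\mathbb{Z}\to\mathbb{Z}_2$, i.e. there is a homomorphism $\tilde\alpha:\Pi\to\mathbb{Z}$ with $\mathfrak{q}\circ\tilde\alpha=\alpha$.
   Context: The model two-complex of a presentation has one $0$-cell, one $1$-cell for each generator and one $2$-cell for each relator attached along that relator word. $\mathbb{Z}_2$ denotes the cyclic group of order two. *)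

From HB Require Import structures.
From mathcomp Require Import all_boot all_order all_algebra.
Set Implicit Arguments. Unset Strict Implicit. Unset Printing Implicit Defensive.
Import Order.TTheory GRing.Theory Num.Theory.
Local Open Scope ring_scope.

(* A word in the generators x_0..x_{n-1}: a list of letters (i, inv),
   meaning x_i if inv = false and x_i^{-1} if inv = true. *)
Definition word (n : nat) := seq ('I_n * bool).

Definition weval (A : zmodType) (n : nat) (phi : 'I_n -> A) (w : word n) : A :=
  \sum_(l <- w) (if l.2 then - phi l.1 else phi l.1).

(* Homomorphisms Pi -> A, Pi = < x_1..x_n | r_1..r_m >, A abelian:
   assignments of the generators killing every relator. *)
Definition is_hom (A : zmodType) (n m : nat) (rels : 'I_m -> word n)
  (phi : 'I_n -> A) : Prop :=
  forall j : 'I_m, weval phi (rels j) = 0.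

Definition homZ2 (n m : nat) (rels : 'I_m -> word n) : {set {ffun 'I_n -> 'Z_2}} :=
  [set phi : {ffun 'I_n -> 'Z_2} | [forall j : 'I_m, weval phi (rels j) == 0]].

(* Cellular cochain complex of the model two-complex with Z coefficients:
   C^1 = Z^n (functions on 1-cells), C^2 = Z^m (functions on 2-cells);
   the coboundary d^1 f evaluated on the 2-cell of r_j is the sum over
   the letters of r_j of +- f(x_i) (incidence numbers = exponent sums). *)
Definition cobound1 (n m : nat) (rels : 'I_m -> word n) (f : 'I_n -> int)
  : 'I_m -> int := fun j => weval f (rels j).

Definition cong2 (n m : nat) (rels : 'I_m -> word n) (u v : 'I_m -> int) : Prop :=
  exists f : 'I_n -> int, forall j, u j - v j = cobound1 rels f j.

(* H^2(K;Z) = C^2 / im d^1 (d^2 = 0 in a 2-complex) is finite of order N: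
   there are N pairwise distinct cosets covering C^2. *)
Definition H2_card (n m : nat) (rels : 'I_m -> word n) (N : nat) : Prop :=
  exists reps : 'I_N -> ('I_m -> int),
    (forall a b : 'I_N, cong2 rels (reps a) (reps b) -> a = b) /\
    (forall u : 'I_m -> int, exists a : 'I_N, cong2 rels u (reps a)).

(* Let D : Z^n -> Z^m be the cellular coboundary, so that H^2(K;Z) = Z^m / im D
   has odd order N.  Translation by any u permutes the N cosets of im D, and
   summing over them shows N u \in im D.  Reducing mod 2 (where N = 1), D is onto
   Z_2^m, so m <= n and Hom(Pi; Z_2) = ker (D mod 2) is a Z_2-space of dimension
   n - m.  If a : Z^n lifts a mod-2 homomorphism, then D a = 2 u for some u; taking
   D g = N u, the integral cocycle N a - 2 g lifts it. *)

From HB Require Import structures.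
From mathcomp Require Import all_boot all_order all_algebra ring.
From Stdlib Require Import ClassicalEpsilon.
Import GRing.Theory.
Local Open Scope ring_scope.
Set Implicit Arguments. Unset Strict Implicit.

Section WordEvaluation.
Variables (n : nat) (w : word n).

Lemma weval_ext (A : zmodType) (phi psi : 'I_n -> A) :
  phi =1 psi -> weval phi w = weval psi w.
Proof. by move=> eq_phi; apply: eq_bigr => l _; rewrite eq_phi. Qed.

Lemma weval_additive (A B : zmodType) (f : {additive A -> B}) (phi : 'I_n -> A) :
  weval (fun i => f (phi i)) w = f (weval phi w).
Proof.
by rewrite /weval raddf_sum; apply: eq_bigr => l _; case: l.2; rewrite ?raddfN.
Qed.

Lemma weval_intr (R : pzRingType) (g : 'I_n -> int) :
  weval (fun i => (g i)%:~R : R) w = (weval g w)%:~R.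
Proof. exact: weval_additive (intmul 1) g. Qed.

Lemma weval_mull (R : pzRingType) (a : R) (phi : 'I_n -> R) :
  weval (fun i => a * phi i) w = a * weval phi w.
Proof. exact: weval_additive (a \*o idfun) phi. Qed.

Lemma weval_sub (A : zmodType) (phi psi : 'I_n -> A) :
  weval (fun i => phi i - psi i) w = weval phi w - weval psi w.
Proof.
rewrite /weval -sumrB; apply: eq_bigr => l _.
by case: l.2; rewrite ?opprB ?opprK // addrC.
Qed.

Lemma weval_mulrn (A : zmodType) (phi : 'I_n -> A) k :
  weval (fun i => phi i *+ k) w = weval phi w *+ k.
Proof.
by rewrite /weval -sumrMnl; apply: eq_bigr => l _; case: l.2; rewrite ?mulNrn.
Qed.

Lemma weval_sum (A : zmodType) (I : Type) (r : seq I) (P : pred I)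
    (F : I -> 'I_n -> A) :
  weval (fun i => \sum_(a <- r | P a) F a i) w = \sum_(a <- r | P a) weval (F a) w.
Proof.
by rewrite /weval exchange_big; apply: eq_bigr => l _; case: l.2; rewrite ?sumrN.
Qed.

End WordEvaluation.

Section Coboundaries.
Variables (n m : nat) (rels : 'I_m -> word n).

Definition coboundary (u : 'I_m -> int) : Prop :=
  exists f : 'I_n -> int, forall j, u j = cobound1 rels f j.

Lemma coboundary_ext u v : u =1 v -> coboundary u -> coboundary v.
Proof. by move=> eq_uv [f Hf]; exists f => j; rewrite -eq_uv. Qed.

Lemma coboundaryB u v :
  coboundary u -> coboundary v -> coboundary (fun j => u j - v j).
Proof.
move=> [f Hf] [g Hg]; exists (fun i => f i - g i) => j.
by rewrite /cobound1 weval_sub Hf Hg.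
Qed.

Lemma coboundary_sum (I : Type) (r : seq I) (P : pred I) (F : I -> 'I_m -> int) :
  (forall a, P a -> coboundary (F a)) ->
  coboundary (fun j => \sum_(a <- r | P a) F a j).
Proof.
move=> cobF; have [g Hg] : exists g : I -> 'I_n -> int,
    forall a, P a -> forall j, F a j = cobound1 rels (g a) j.
  apply: (choice (fun a f => P a -> forall j, F a j = cobound1 rels f j)) => a.
  by case: (boolP (P a)) => [/cobF [f Hf] | _]; [exists f | exists (fun=> 0)].
exists (fun i => \sum_(a <- r | P a) g a i) => j.
by rewrite /cobound1 weval_sum; apply: eq_bigr => a Pa; apply: Hg.
Qed.

Lemma coboundary_mulrn_card N (u : 'I_m -> int) :
  H2_card rels N -> coboundary (fun j => u j *+ N).
Proof.
move=> [reps [reps_inj reps_cover]].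
have [shift shiftP] := choice _ (fun a => reps_cover (fun j => reps a j + u j)).
have shift_inj : injective shift.
  move=> a b eq_shift; apply: reps_inj.
  apply: coboundary_ext (coboundaryB (shiftP a) (shiftP b)) => j.
  by rewrite eq_shift; ring.
have := @coboundary_sum _ (index_enum 'I_N) xpredT
  (fun a j => reps a j + u j - reps (shift a) j) (fun a _ => shiftP a).
apply: coboundary_ext => j.
rewrite sumrB big_split /= (reindex_inj shift_inj) /= sumr_const card_ord.
by rewrite addrAC subrr add0r.
Qed.

End Coboundaries.

Lemma Zp_natzK p (x : 'Z_p) : ((x : nat)%:Z)%:~R = x.
Proof. exact: natr_Zp. Qed.

Lemma Z2_mulrn_odd (x : 'Z_2) k : odd k -> x *+ k = x.
Proof.
move=> odd_k; have k1 : k%:R = 1 :> 'Z_2.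
  by apply: val_inj; rewrite /= val_Zp_nat // modn2 odd_k.
by rewrite -mulr_natr k1 mulr1.
Qed.

Lemma Z2_pchar : 2 \in [pchar 'Z_2].
Proof. exact: (@pchar_Fp 2). Qed.

Section OddOrderH2.
Variables (n m : nat) (rels : 'I_m -> word n) (N : nat).
Hypotheses (oddN : odd N) (H2N : H2_card rels N).

Lemma cobound1_mod2_surj (v : 'I_m -> 'Z_2) :
  exists phi : 'I_n -> 'Z_2, forall j, weval phi (rels j) = v j.
Proof.
have [g Hg] := coboundary_mulrn_card (fun j => (v j : nat)%:Z) H2N.
exists (fun i => (g i)%:~R) => j.
by rewrite weval_intr -[weval g _]/(cobound1 rels g j) -Hg raddfMn /= Zp_natzK
  Z2_mulrn_odd.
Qed.

Lemma hom_mod2_lift (alpha : 'I_n -> 'Z_2) :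
  (forall j, weval alpha (rels j) = 0) ->
  exists beta : 'I_n -> int, is_hom rels beta /\ forall i, (beta i)%:~R = alpha i.
Proof.
move=> hom_alpha; pose a i := (alpha i : nat)%:Z.
have alpha_a i : (a i)%:~R = alpha i by apply: Zp_natzK.
have even_a j : (2 %| weval a (rels j))%Z.
  rewrite (dvdz_pcharf Z2_pchar) -weval_intr.
  by rewrite (weval_ext _ alpha_a) hom_alpha.
have [g Hg] := coboundary_mulrn_card (fun j => (weval a (rels j) %/ 2)%Z) H2N.
exists (fun i => a i *+ N - g i *+ 2); split => [j | i].
  rewrite weval_sub !weval_mulrn -[weval g _]/(cobound1 rels g j) -Hg.
  by rewrite -mulrnA mulnC mulrnA [_ *+ 2]pmulrn mulrzz divzK // subrr.
by rewrite rmorphB !rmorphMn /= alpha_a Z2_mulrn_odd // -mulr_natr pchar_Zp //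
  mulr0 subr0.
Qed.

End OddOrderH2.

Section RowSpaces.
Variable F : fieldType.

Lemma surj_row_full n m (A : 'M[F]_(n, m)) :
  (forall v : 'rV_m, exists u, u *m A = v) -> row_full A.
Proof.
move=> surjA; rewrite -sub1mx; apply/row_subP => j.
by have [u <-] := surjA (row j 1%:M); apply: submxMl.
Qed.

Lemma row_full_kermx_basis n m (A : 'M[F]_(n, m)) :
  row_full A -> exists2 B : 'M[F]_(n - m, n), row_free B & (B :=: kermx A)%MS.
Proof.
move=> /eqP rkA; have rk_ker : \rank (kermx A) = (n - m)%N.
  by rewrite mxrank_ker rkA.
exists (castmx (rk_ker, erefl n) (row_base (kermx A))).
  by rewrite row_free_castmx row_base_free.
exact: eqmx_trans (eqmx_cast _ _) (eq_row_base _).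
Qed.

Definition mxffun k n (B : 'M[F]_(k, n)) (x : {ffun 'I_k -> F}) : {ffun 'I_n -> F} :=
  [ffun i => (\row_j x j *m B) 0 i].

Lemma row_ffunD n (x y : {ffun 'I_n -> F}) :
  \row_j (x + y) j = \row_j x j + \row_j y j.
Proof. by apply/rowP => j; rewrite !mxE ffunE. Qed.

Lemma mxffunD k n (B : 'M[F]_(k, n)) : {morph mxffun B : x y / x + y}.
Proof. by move=> x y; apply/ffunP => i; rewrite !ffunE row_ffunD mulmxDl mxE. Qed.

Lemma mxffun_inj k n (B : 'M[F]_(k, n)) : row_free B -> injective (mxffun B).
Proof.
move=> freeB x y /ffunP eq_xy; apply/ffunP => j.
suff /rowP/(_ j) : \row_j x j = \row_j y j by rewrite !mxE.
by apply: (row_free_inj freeB); apply/rowP => i; have := eq_xy i; rewrite !ffunE.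
Qed.

Lemma mxffunP k n (B : 'M[F]_(k, n)) (phi : {ffun 'I_n -> F}) :
  (\row_i phi i <= B)%MS <-> exists x, mxffun B x = phi.
Proof.
split=> [/submxP[u def_phi] | [x <-]].
  exists [ffun j => u 0 j]; apply/ffunP => i; rewrite ffunE.
  have -> : \row_j [ffun j => u 0 j] j = u by apply/rowP => j; rewrite !mxE ffunE.
  by rewrite -def_phi mxE.
have -> : \row_i mxffun B x i = \row_j x j *m B.
  by apply/rowP => i; rewrite [LHS]mxE ffunE.
exact: submxMl.
Qed.

End RowSpaces.

Section RelationMatrix.
Variables (n m : nat) (rels : 'I_m -> word n).

Lemma homZ2P (phi : {ffun 'I_n -> 'Z_2}) :
  reflect (forall j, weval phi (rels j) = 0) (phi \in homZ2 rels).
Proof. by rewrite inE; apply: (iffP forallP) => hom j; apply/eqP. Qed.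

(* 'F_2 is convertible to 'Z_2 and carries the field structure that rank
   arguments need. *)
Definition relmx : 'M['F_2]_(n, m) :=
  \matrix_(i, j) weval (fun k => (k == i)%:R) (rels j).

Lemma mul_row_relmx (phi : 'I_n -> 'F_2) j :
  (\row_i phi i *m relmx) 0 j = weval phi (rels j).
Proof.
rewrite mxE; under eq_bigr => i _ do rewrite !mxE -weval_mull.
rewrite -weval_sum; apply: weval_ext => k.
rewrite (bigD1 k) //= eqxx mulr1 big1 ?addr0 // => i /negbTE.
by rewrite eq_sym => ->; rewrite mulr0.
Qed.

Lemma homZ2_kermx (phi : {ffun 'I_n -> 'Z_2}) :
  phi \in homZ2 rels = (\row_i (phi i : 'F_2) <= kermx relmx)%MS.
Proof.
rewrite sub_kermx; apply/homZ2P/eqP => [hom | /rowP zero j].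
  by apply/rowP => j; rewrite mul_row_relmx mxE hom.
by have := zero j; rewrite mul_row_relmx mxE.
Qed.

Lemma relmx_row_full N : odd N -> H2_card rels N -> row_full relmx.
Proof.
move=> oddN H2N; apply: surj_row_full => v.
have [phi Hphi] := cobound1_mod2_surj oddN H2N (fun j => v 0 j).
by exists (\row_i phi i); apply/rowP => j; rewrite mul_row_relmx Hphi.
Qed.

End RelationMatrix.

Unset Implicit Arguments.

Theorem lemma3p1 (n m : nat) (rels : 'I_m -> word n) :
  (exists N : nat, odd N /\ H2_card rels N) ->
  [/\ (m <= n)%N,
      (exists f : {ffun 'I_(n - m) -> 'Z_2} -> {ffun 'I_n -> 'Z_2},
          [/\ injective f, {morph f : x y / x + y} &
              forall phi, phi \in homZ2 rels <-> exists x, f x = phi])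
    & forall alpha : {ffun 'I_n -> 'Z_2}, alpha \in homZ2 rels ->
        exists beta : 'I_n -> int,
          is_hom rels beta /\ forall i, (beta i)%:~R = alpha i].
Proof.
move=> [N [oddN H2N]].
have full := relmx_row_full oddN H2N.
have [B freeB kerB] := row_full_kermx_basis full.
split.
- by rewrite -(eqP full) rank_leq_row.
- exists (mxffun B); split; [exact: (mxffun_inj freeB) | exact: (mxffunD B) | move=> phi].
  by rewrite homZ2_kermx -kerB; apply: mxffunP.
- by move=> alpha /homZ2P; apply: hom_mod2_lift oddN H2N alpha.
Qed.
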